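(* A $\star$-metric space $(X,d^\star)$ is complete if and only if for every decreasing sequence $F_1\supseteq F_2\supseteq F_3\supseteq\cdots$ of nonempty closed subsets of $X$ with $\lim_{n\to\infty}\delta(F_n)=0$, the intersection $\bigcap_{n=1}^\infty F_n$ is a one-point set.
   Context: A $t$-definer is a function $\star:[0,\infty)\times[0,\infty)\to[0,\infty)$ such that for all $a,b,c\ge 0$: $a\star b=b\star a$; $a\star(b\star c)=(a\star b)\star c$; if $a\le b$ then $a\star c\le b\star c$; $a\star 0=a$; and $\star$ is continuous in its first variable with respect to the Euclidean topology. Given a nonempty set $X$ and a $t$-definer $\star$, a $\star$-metric on $X$ is a function $d^\star:X\times X\to[0,\infty)$ such that for all $x,y,z\in X$: $d^\star(x,y)=0$ iff $x=y$; $d^\star(x,y)=d^\star(y,x)$; and $d^\star(x,y)\le d^\star(x,z)\star d^\star(z,y)$. Closedness refers to the topology $\mathscr{T}_{d^\star}$ consisting of all $U\subseteq X$ such that for each $a\in U$ there is $r>0$ with $\{x: d^\star(a,x)<r\}\subseteq U$. The diameter of $A\subseteq X$ is $\delta(A)=\sup_{x,y\in A}d^\star(x,y)$ (possibly $\infty$), with $\delta(\emptyset)=0$. A sequence $\{x_n\}$ is Cauchy if for every $\epsilon>0$ there is $k$ with $d^\star(x_n,x_m)<\epsilon$ for all $m,n\ge k$; it converges to $x$ if for every $\epsilon>0$ there is $k$ with $d^\star(x,x_n)<\epsilon$ for $n\ge k$. $(X,d^\star)$ is complete if every Cauchy sequence converges to a point of $X$. *)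

From Stdlib Require Import Reals.
Open Scope R_scope.

(* A t-definer: an operation on [0,oo), modelled as a function R -> R -> R
   whose axioms are required on nonnegative arguments. *)
Record t_definer (star : R -> R -> R) : Prop := {
  td_nonneg : forall a b, 0 <= a -> 0 <= b -> 0 <= star a b;
  td_comm : forall a b, 0 <= a -> 0 <= b -> star a b = star b a;
  td_assoc : forall a b c, 0 <= a -> 0 <= b -> 0 <= c ->
      star a (star b c) = star (star a b) c;
  td_mono : forall a b c, 0 <= a -> 0 <= b -> 0 <= c -> a <= b ->
      star a c <= star b c;
  td_zero : forall a, 0 <= a -> star a 0 = a;
  td_cont : forall c a, 0 <= c -> 0 <= a ->
      forall eps, 0 < eps -> exists delta, 0 < delta /\
        forall a', 0 <= a' -> Rabs (a' - a) < delta ->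
          Rabs (star a' c - star a c) < eps
}.

Record star_metric {X : Type} (star : R -> R -> R) (d : X -> X -> R) : Prop := {
  sm_nonneg : forall x y, 0 <= d x y;
  sm_zero : forall x y, d x y = 0 <-> x = y;
  sm_sym : forall x y, d x y = d y x;
  sm_tri : forall x y z, d x y <= star (d x z) (d z y)
}.

Section StarMetric.
Context {X : Type} (d : X -> X -> R).

Definition sm_open (U : X -> Prop) : Prop :=
  forall a, U a -> exists r, 0 < r /\ forall x, d a x < r -> U x.

Definition sm_closed (F : X -> Prop) : Prop := sm_open (fun x => ~ F x).

Definition cauchy (u : nat -> X) : Prop :=
  forall eps, 0 < eps -> exists k, forall n m, (k <= n)%nat -> (k <= m)%nat ->
    d (u n) (u m) < eps.

Definition converges_to (u : nat -> X) (x : X) : Prop :=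
  forall eps, 0 < eps -> exists k, forall n, (k <= n)%nat -> d x (u n) < eps.

Definition complete : Prop :=
  forall u, cauchy u -> exists x, converges_to u x.

(* delta(A) < e, where delta(A) = sup_{x,y in A} d x y in [0,oo]
   (with delta(empty) = 0): there is a finite bound r < e on all distances. *)
Definition diam_lt (A : X -> Prop) (e : R) : Prop :=
  exists r, r < e /\ 0 <= r /\ forall x y, A x -> A y -> d x y <= r.

(* lim_{n -> oo} delta(F n) = 0  (delta >= 0, so this is: eventually delta < eps) *)
Definition diam_tends_to_0 (F : nat -> X -> Prop) : Prop :=
  forall eps, 0 < eps -> exists N, forall n, (N <= n)%nat -> diam_lt (F n) eps.

End StarMetric.

(* Forward direction: a choice of points x_n in F_n is Cauchy because the
   diameters shrink; its limit lies in every F_n since the F_n are closed, and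
   is the only such point since two common points are at distance below every
   delta(F_n).  Backward direction: for a Cauchy sequence u, the adherences of
   the tails {u_m | m >= n} form a nested sequence of nonempty closed sets with
   diameters tending to 0, and their common point is the limit of u.  Since
   the triangle inequality only holds up to the t-definer, all estimates go
   through continuity of a |-> star a c at 0, where star 0 c = c. *)

From Stdlib Require Import Reals Lra Lia Classical ClassicalEpsilon.
Open Scope R_scope.

Section TDefiner.
Variable star : R -> R -> R.
Hypothesis Hs : t_definer star.

Lemma star_monor a b b' :
  0 <= a -> 0 <= b -> b <= b' -> star a b <= star a b'.
Proof.
  intros ha hb hbb.
  rewrite (td_comm _ Hs a b), (td_comm _ Hs a b') by lra.
  apply (td_mono _ Hs); lra.
Qed.

Lemma star_lt_add_of_small c e : 0 <= c -> 0 < e ->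
  exists del, 0 < del /\
    forall a b, 0 <= a -> a < del -> 0 <= b -> b <= c -> star a b < c + e.
Proof.
  intros hc he.
  destruct (td_cont _ Hs c 0 hc (Rle_refl 0) e he) as [del [hdel Hcont]].
  exists del; split; [exact hdel|].
  intros a b ha hadel hb hbc.
  assert (H0c : star 0 c = c).
  { rewrite (td_comm _ Hs) by lra. apply (td_zero _ Hs); lra. }
  assert (Hac : Rabs (star a c - c) < e).
  { rewrite <- H0c at 2. apply Hcont; [exact ha|].
    rewrite Rminus_0_r, Rabs_right; lra. }
  assert (star a b <= star a c) by (apply star_monor; lra).
  apply Rabs_def2 in Hac. lra.
Qed.

End TDefiner.

Section StarMetricSpace.
Variables (X : Type) (star : R -> R -> R) (d : X -> X -> R).
Hypothesis Hs : t_definer star.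
Hypothesis Hm : star_metric star d.

Lemma dist_refl x : d x x = 0.
Proof. apply (sm_zero _ _ Hm); reflexivity. Qed.

Lemma dist_lt_add_of_near c e : 0 <= c -> 0 < e ->
  exists del, 0 < del /\
    forall x y z, d x z < del -> d z y <= c -> d x y < c + e.
Proof.
  intros hc he.
  destruct (star_lt_add_of_small _ Hs c e hc he) as [del [hdel Hdel]].
  exists del; split; [exact hdel|].
  intros x y z hxz hzy.
  pose proof (sm_tri _ _ Hm x y z).
  assert (star (d x z) (d z y) < c + e)
    by (apply Hdel; auto; apply (sm_nonneg _ _ Hm)).
  lra.
Qed.

Lemma nested_le (F : nat -> X -> Prop) :
  (forall n x, F (S n) x -> F n x) ->
  forall n m x, (n <= m)%nat -> F m x -> F n x.
Proof. intros Hdec n m x hnm; induction hnm; auto. Qed.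

Lemma sm_closed_lim (F : X -> Prop) u x N :
  sm_closed d F -> converges_to d u x ->
  (forall n, (N <= n)%nat -> F (u n)) -> F x.
Proof.
  intros Hcl Hx HuF.
  apply NNPP; intro HFx.
  destruct (Hcl x HFx) as [r [hr Hball]].
  destruct (Hx r hr) as [k Hk].
  apply (Hball (u (max N k))); [apply Hk | apply HuF]; lia.
Qed.

Lemma cauchy_nested_diam (F : nat -> X -> Prop) u :
  (forall n x, F (S n) x -> F n x) -> diam_tends_to_0 d F ->
  (forall n, F n (u n)) -> cauchy d u.
Proof.
  intros Hdec Hdiam Hu eps heps.
  destruct (Hdiam eps heps) as [N HN].
  destruct (HN N (le_n N)) as [r [hr [_ Hr]]].
  exists N; intros n m hn hm.
  assert (d (u n) (u m) <= r); [|lra].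
  apply Hr; [apply (nested_le F Hdec N n) | apply (nested_le F Hdec N m)]; auto.
Qed.

Lemma diam_tends_to_0_unique (F : nat -> X -> Prop) x y :
  diam_tends_to_0 d F -> (forall n, F n x) -> (forall n, F n y) -> x = y.
Proof.
  intros Hdiam Hx Hy.
  apply (sm_zero _ _ Hm).
  destruct (Rle_lt_or_eq_dec 0 (d x y) (sm_nonneg _ _ Hm x y)) as [Hpos|]; [|auto].
  destruct (Hdiam _ Hpos) as [N HN].
  destruct (HN N (le_n N)) as [r [hr [_ Hr]]].
  specialize (Hr x y (Hx N) (Hy N)). lra.
Qed.

Definition tail_adherence (u : nat -> X) (n : nat) (x : X) : Prop :=
  forall r, 0 < r -> exists m, (n <= m)%nat /\ d x (u m) < r.

Lemma tail_adherence_decr u n x :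
  tail_adherence u (S n) x -> tail_adherence u n x.
Proof.
  intros Hx r hr. destruct (Hx r hr) as [m [hm hxm]].
  exists m; split; [lia | exact hxm].
Qed.

Lemma tail_adherence_self u n : tail_adherence u n (u n).
Proof. intros r hr. exists n; split; [lia|]. rewrite dist_refl; exact hr. Qed.

Lemma tail_adherence_of_approx u n x :
  (forall r, 0 < r -> exists y, d x y < r /\ tail_adherence u n y) ->
  tail_adherence u n x.
Proof.
  intros Happrox r hr.
  destruct (dist_lt_add_of_near (r/2) (r/2) ltac:(lra) ltac:(lra))
    as [del [hdel Hdel]].
  destruct (Happrox del hdel) as [y [hxy Hy]].
  destruct (Hy (r/2) ltac:(lra)) as [m [hm hym]].
  exists m; split; [exact hm|].
  replace r with (r/2 + r/2) by field.
  apply (Hdel x (u m) y); lra.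
Qed.

Lemma tail_adherence_closed u n : sm_closed d (tail_adherence u n).
Proof.
  intros x Hx.
  apply NNPP; intro Hnot; apply Hx, tail_adherence_of_approx.
  intros r hr.
  apply NNPP; intro Hfar; apply Hnot.
  exists r; split; [exact hr|].
  intros y hxy Hy; apply Hfar; exists y; split; assumption.
Qed.

Lemma cauchy_tail_adherence_diam u :
  cauchy d u -> diam_tends_to_0 d (tail_adherence u).
Proof.
  intros Hu eps heps.
  destruct (Hu (eps/4) ltac:(lra)) as [N HN].
  exists N; intros n hn.
  exists (eps/2); split; [lra|]; split; [lra|].
  intros a b Ha Hb.
  destruct (dist_lt_add_of_near (eps/4) (eps/8) ltac:(lra) ltac:(lra))
    as [del1 [hdel1 Hdel1]].
  destruct (dist_lt_add_of_near (3*eps/8) (eps/8) ltac:(lra) ltac:(lra))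
    as [del2 [hdel2 Hdel2]].
  destruct (Ha del2 hdel2) as [m [hm ham]].
  destruct (Hb del1 hdel1) as [k [hk hbk]].
  assert (Hkm : d (u k) (u m) <= eps/4) by (left; apply HN; lia).
  assert (Hmb : d (u m) b <= 3*eps/8).
  { rewrite (sm_sym _ _ Hm). left.
    replace (3*eps/8) with (eps/4 + eps/8) by field. apply (Hdel1 _ _ (u k)); auto. }
  replace (eps/2) with (3*eps/8 + eps/8) by field.
  left; apply (Hdel2 _ _ (u m)); auto.
Qed.

Lemma tail_adherence_converges u x :
  cauchy d u -> (forall n, tail_adherence u n x) -> converges_to d u x.
Proof.
  intros Hu Hx eps heps.
  destruct (Hu (eps/2) ltac:(lra)) as [N HN].
  destruct (dist_lt_add_of_near (eps/2) (eps/2) ltac:(lra) ltac:(lra))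
    as [del [hdel Hdel]].
  exists N; intros n hn.
  destruct (Hx N del hdel) as [m [hm hxm]].
  replace eps with (eps/2 + eps/2) by field.
  apply (Hdel _ _ (u m)); [exact hxm|].
  left; apply HN; lia.
Qed.

Lemma complete_nested_closed (F : nat -> X -> Prop) :
  complete d ->
  (forall n x, F (S n) x -> F n x) ->
  (forall n, exists x, F n x) ->
  (forall n, sm_closed d (F n)) ->
  diam_tends_to_0 d F ->
  exists x, forall y, (forall n, F n y) <-> y = x.
Proof.
  intros Hc Hdec Hne Hcl Hdiam.
  destruct (choice (fun n x => F n x) Hne) as [u Hu].
  destruct (Hc u (cauchy_nested_diam F u Hdec Hdiam Hu)) as [x Hx].
  assert (HxF : forall n, F n x).
  { intro n. apply (sm_closed_lim (F n) u x n (Hcl n) Hx).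
    intros m hm. apply (nested_le F Hdec n m); [exact hm | apply Hu]. }
  exists x; intro y; split.
  - intro Hy. exact (diam_tends_to_0_unique F y x Hdiam Hy HxF).
  - intros ->. exact HxF.
Qed.

Lemma nested_closed_complete :
  (forall F : nat -> X -> Prop,
     (forall n x, F (S n) x -> F n x) ->
     (forall n, exists x, F n x) ->
     (forall n, sm_closed d (F n)) ->
     diam_tends_to_0 d F ->
     exists x, forall y, (forall n, F n y) <-> y = x) ->
  complete d.
Proof.
  intros HF u Hu.
  destruct (HF (tail_adherence u)) as [x Hx].
  - apply tail_adherence_decr.
  - intro n. exists (u n). apply tail_adherence_self.
  - apply tail_adherence_closed.
  - apply cauchy_tail_adherence_diam, Hu.
  - exists x. apply (tail_adherence_converges u x Hu), Hx. reflexivity.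
Qed.

End StarMetricSpace.

Theorem theorem4p9 (X : Type) (star : R -> R -> R) (d : X -> X -> R) :
  inhabited X -> t_definer star -> star_metric star d ->
  (complete d <->
   forall F : nat -> X -> Prop,
     (forall n x, F (S n) x -> F n x) ->
     (forall n, exists x, F n x) ->
     (forall n, sm_closed d (F n)) ->
     diam_tends_to_0 d F ->
     exists x, forall y, (forall n, F n y) <-> y = x).
Proof.
  intros _ Hs Hm; split.
  - intros Hc F. exact (complete_nested_closed _ _ _ Hm F Hc).
  - exact (nested_closed_complete _ _ _ Hs Hm).
Qed.
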